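(* Let $G=(V,E)$ be an undirected graph, $r_\alpha$ a nonnegative integer and $\alpha\colon V\to\{0,1\}$. There is an $r_\alpha$-biased $(1,1)$-dissolution for $(G,\alpha)$ if and only if $G$ has a perfect matching of total weight at least $r_\alpha$ with respect to the edge weights $w(\{x,y\}):=1$ if $\alpha(x)=\alpha(y)=1$ and $w(\{x,y\}):=0$ otherwise.
   Context: For $V'\subseteq V(G)$ let $Z(V',G):=\{(x,y)\mid x\in V',\ y\in V(G)\setminus V',\ \{x,y\}\in E(G)\}$. For positive integers $s,\Delta_s$, an $(s,\Delta_s)$-dissolution for $G$ is a pair $(D,z)$ with $D\subset V(G)$ and $z\colon Z(D,G)\to\{0,\dots,s\}$ such that (a) each $v'\in D$ satisfies $\sum_{(v',v)\in Z(D,G)} z(v',v)=s$, and (b) each $v\in V(G)\setminus D$ satisfies $\sum_{(v',v)\in Z(D,G)} z(v',v)=\Delta_s$. Given $\alpha\colon V(G)\to\{0,\dots,s\}$ and an integer $r_\alpha$, a tuple $(D,z,z_\alpha,R_\alpha)$ is an $r_\alpha$-biased $(s,\Delta_s)$-dissolution for $(G,\alpha)$ if $(D,z)$ is an $(s,\Delta_s)$-dissolution, $z_\alpha\colon Z(D,G)\to\{0,\dots,s\}$, $R_\alpha\subseteq V(G)\setminus D$ with $|R_\alpha|=r_\alpha$, and (c) $z_\alpha(v',v)\le z(v',v)$ for all $(v',v)\in Z(D,G)$; (d) each $v'\in D$ satisfies $\sum_{(v',v)\in Z(D,G)} z_\alpha(v',v)=\alpha(v')$; (e) each $v\in R_\alpha$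 satisfies $\alpha(v)+\sum_{(v',v)\in Z(D,G)} z_\alpha(v',v)>(s+\Delta_s)/2$. *)

From mathcomp Require Import all_boot.
Set Implicit Arguments. Unset Strict Implicit. Unset Printing Implicit Defensive.

(* An undirected (simple) graph on a finite vertex type T is given by a
   symmetric irreflexive adjacency relation e : rel T. *)

Definition inZ (T : finType) (e : rel T) (D : {set T}) (x y : T) : bool :=
  [&& x \in D, y \notin D & e x y].

(* (s, Delta_s)-dissolution (D, z).  z is a total function T -> T -> nat of
   which only the values on Z(D,G) matter. *)
Definition dissolution (T : finType) (e : rel T) (s Ds : nat)
    (D : {set T}) (z : T -> T -> nat) : Prop :=
  (forall x y, inZ e D x y -> z x y <= s) /\
  (forall v', v' \in D -> \sum_(v | inZ e D v' v) z v' v = s) /\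
  (forall v, v \notin D -> \sum_(v' | inZ e D v' v) z v' v = Ds).

Definition biased_dissolution (T : finType) (e : rel T) (s Ds : nat)
    (alpha : T -> nat) (r : nat)
    (D : {set T}) (z za : T -> T -> nat) (R : {set T}) : Prop :=
  dissolution e s Ds D z /\
  (forall x y, inZ e D x y -> za x y <= s) /\
  R \subset ~: D /\ #|R| = r /\
  (forall x y, inZ e D x y -> za x y <= z x y) /\
  (forall v', v' \in D -> \sum_(v | inZ e D v' v) za v' v = alpha v') /\
  (* alpha(v) + sum > (s + Ds)/2, written over the integers *)
  (forall v, v \in R -> s + Ds < 2 * (alpha v + \sum_(v' | inZ e D v' v) za v' v)).

Definition perfect_matching (T : finType) (e : rel T) (M : {set {set T}}) : Prop :=
  (forall f, f \in M -> exists x y, e x y /\ f = [set x; y]) /\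
  (forall v, exists f, [/\ f \in M, v \in f &
                         forall g, g \in M -> v \in g -> g = f]).

Definition edge_weight (T : finType) (alpha : T -> nat) (f : {set T}) : nat :=
  if [forall x in f, alpha x == 1] then 1 else 0.

Definition matching_weight (T : finType) (alpha : T -> nat) (M : {set {set T}}) : nat :=
  \sum_(f in M) edge_weight alpha f.

From mathcomp Require Import all_boot zify.
Set Implicit Arguments. Unset Strict Implicit. Unset Printing Implicit Defensive.

(* A (1,1)-dissolution (D, z) is a perfect matching whose edges are oriented
   from D to its complement: the matching is described by a fixed-point-free
   involution p exchanging D and ~: D, and z x y = [y == p x].  Every perfect
   matching can be oriented this way.  Since alpha is 0/1-valued, the bias
   condition at v \notin D says alpha v = alpha (p v) = 1, and za := z * alpha
   realises it at every such v; so an r-biased dissolution exists exactly when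
   r is at most the number of heavy matching edges, each edge being counted
   once through its endpoint outside D. *)

Lemma card_subset_exists (T : finType) (A : {set T}) k :
  k <= #|A| -> exists2 B : {set T}, B \subset A & #|B| = k.
Proof.
case/card_geqP=> s [s_uniq <- sA]; exists [set x in s].
  by apply/subsetP=> x; rewrite inE; apply: sA.
by rewrite cardsE (card_uniqP s_uniq).
Qed.

Lemma sum_nat_pred1 (I : finType) (P : pred I) (a : I) (F : I -> nat) :
  P a -> \sum_(i | P i) (i == a) * F i = F a.
Proof.
by move=> Pa; rewrite (bigD1 a) //= eqxx mul1n big1 ?addn0 // => i /andP[_ /negbTE->].
Qed.

Lemma set2_inj_r (T : finType) (v u w : T) :
  w != v -> [set v; u] = [set v; w] -> u = w.
Proof.
move=> wv vuE; have : w \in [set v; u] by rewrite vuE !inE eqxx orbT.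
by rewrite !inE (negbTE wv) => /eqP.
Qed.

Section PerfectMatchings.

Variable T : finType.

Lemma involution_of_unique_link (link : rel T) :
  symmetric link -> (forall v, exists w, forall u, link v u = (u == w)) ->
  exists2 p : T -> T, involutive p & forall v u, link v u = (u == p v).
Proof.
move=> link_sym /fin_all_exists[p linkP]; exists p => // v.
by apply/esym/eqP; rewrite -linkP link_sym linkP.
Qed.

Lemma crossing_set_exists (p : T -> T) :
  involutive p -> (forall v, p v != v) ->
  exists D : {set T}, forall v, (p v \in D) = (v \notin D).
Proof.
move=> pK pfix; exists [set v | enum_rank v < enum_rank (p v)] => v.
by rewrite !inE pK -leqNgt ltn_neqAle val_eqE (can_eq enum_rankK) pfix.
Qed.

Definition matching_of (p : T -> T) : {set {set T}} := [set [set v; p v] | v : T].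

Definition heavy_heads (alpha : T -> nat) (D : {set T}) (p : T -> T) : {set T} :=
  [set v in ~: D | (alpha v == 1) && (alpha (p v) == 1)].

Variable e : rel T.
Hypotheses (e_sym : symmetric e) (e_irr : irreflexive e).

Lemma perfect_matching_of (p : T -> T) :
  involutive p -> (forall v, e v (p v)) -> perfect_matching e (matching_of p).
Proof.
move=> pK pe; split=> [f /imsetP[v _ ->] | v]; first by exists v, (p v).
exists [set v; p v]; split; [exact: imset_f | by rewrite !inE eqxx |].
move=> g /imsetP[u _ ->]; rewrite !inE => /orP[] /eqP-> //.
by rewrite pK setUC.
Qed.

Lemma perfect_matching_involution (M : {set {set T}}) :
  perfect_matching e M ->
  exists p : T -> T, [/\ involutive p, forall v, e v (p v) & M = matching_of p].
Proof.
case=> Medge Mcover.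
have oriented v : exists w, [/\ e v w, [set v; w] \in M &
    forall g, g \in M -> v \in g -> g = [set v; w]].
  have [f [fM vf f_uniq]] := Mcover v; have [x [y [exy fE]]] := Medge f fM.
  move: vf; rewrite fE !inE => /orP[] /eqP vE; subst v.
    by exists y; rewrite -fE.
  by exists x; rewrite setUC -fE e_sym.
pose link := [rel v u | [set v; u] \in M].
have link_sym : symmetric link by move=> v u; rewrite /= setUC.
have link_unique v : exists w, forall u, link v u = (u == w).
  have [w [ew wM w_uniq]] := oriented v; exists w => u /=.
  apply/idP/eqP=> [uM | -> //]; apply: set2_inj_r (w_uniq _ uM _); last first.
    by rewrite !inE eqxx.
  by apply: contraTneq ew => ->; rewrite e_irr.
have [p pK linkP] := involution_of_unique_link link_sym link_unique.
exists p; split=> // [v | ].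
  by have [w [ew wM _]] := oriented v; move: wM; rewrite [_ \in _]linkP => /eqP <-.
apply/setP=> f; apply/idP/imsetP=> [fM | [v _ ->]]; last by rewrite [_ \in _]linkP.
have [x [y [_ fE]]] := Medge f fM; exists x => //.
by move: fM; rewrite fE [_ \in _]linkP => /eqP->.
Qed.

Lemma edge_weight_set2 (alpha : T -> nat) x y :
  edge_weight alpha [set x; y] = (alpha x == 1) && (alpha y == 1).
Proof.
rewrite /edge_weight.
have -> : [forall u in [set x; y], alpha u == 1] = (alpha x == 1) && (alpha y == 1).
  apply/forall_inP/andP=> [heavy | [hx hy] u]; last by rewrite !inE => /orP[]/eqP->.
  by split; apply: heavy; rewrite !inE eqxx ?orbT.
by case: (_ && _).
Qed.

Lemma matching_weight_crossing (alpha : T -> nat) (p : T -> T) (D : {set T}) :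
  involutive p -> (forall v, (p v \in D) = (v \notin D)) ->
  matching_weight alpha (matching_of p) = #|heavy_heads alpha D p|.
Proof.
move=> pK pD.
have -> : matching_of p = [set [set v; p v] | v in ~: D].
  apply/setP=> f; apply/imsetP/imsetP=> [[u _ ->] | [v _ ->]]; last by exists v.
  have [uD | uD] := boolP (u \in D); last by exists u; rewrite ?inE.
  by exists (p u); rewrite ?inE ?pD ?negbK // pK setUC.
rewrite /matching_weight big_imset /=; last first.
  move=> u v; rewrite !inE => uD vD uvE.
  have : u \in [set v; p v] by rewrite -uvE !inE eqxx.
  by rewrite !inE => /orP[/eqP // | /eqP uE]; move: uD; rewrite uE pD vD.
rewrite -sum1dep_card big_mkcondr /=; apply: eq_bigr => v _.
by rewrite edge_weight_set2; case: (_ && _).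
Qed.

End PerfectMatchings.

Section DissolutionToMatching.

Variables (T : finType) (e : rel T) (D : {set T}) (z : T -> T -> nat).
Hypothesis e_sym : symmetric e.

Lemma dissolution11_mate :
  dissolution e 1 1 D z ->
  exists p : T -> T, [/\ involutive p, forall v, e v (p v),
    forall v, (p v \in D) = (v \notin D) &
    forall x y, inZ e D x y -> z x y != 0 -> y = p x].
Proof.
case=> _ [outD inD].
pose arc x y := inZ e D x y && (z x y != 0).
pose link := [rel x y | arc x y || arc y x].
have link_sym : symmetric link by move=> x y; rewrite /= orbC.
have link_unique v : exists w, forall u, link v u = (u == w).
  have [vD | vD] := boolP (v \in D).
    move/eqP/sum_nat_eq1: (outD v vD) => [w [vw zw1 zw0]]; exists w => u.
    rewrite /= {2}/arc /inZ vD andbF orbF; apply/idP/eqP=> [/andP[vu zvu] | ->].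
      by apply: contraTeq zvu => uw; rewrite zw0.
    by rewrite /arc vw zw1.
  move/eqP/sum_nat_eq1: (inD v vD) => [w [wv zw1 zw0]]; exists w => u.
  rewrite /= {1}/arc /inZ (negbTE vD) /=; apply/idP/eqP=> [/andP[uv zuv] | ->].
    by apply: contraTeq zuv => uw; rewrite zw0.
  by rewrite /arc wv zw1.
have [p pK linkP] := involution_of_unique_link link_sym link_unique.
have arc_p v : arc v (p v) || arc (p v) v by have := linkP v (p v); rewrite eqxx.
exists p; split=> // [v | v | x y xy zxy].
- by case/orP: (arc_p v) => /andP[/and3P[_ _ ?] _] //; rewrite e_sym.
- by case/orP: (arc_p v) => /andP[/and3P[-> /negbTE-> _] _].
- by apply/eqP; rewrite -linkP /= /arc xy zxy.
Qed.

Lemma biased_dissolution11_heads (alpha : T -> nat) r za R (p : T -> T) :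
  (forall v, alpha v <= 1) -> involutive p ->
  (forall x y, inZ e D x y -> z x y != 0 -> y = p x) ->
  biased_dissolution e 1 1 alpha r D z za R -> R \subset heavy_heads alpha D p.
Proof.
move=> alpha01 pK arc_p [[_ [_ inD]] [_ [RD [_ [zaz [zaD zaR]]]]]].
apply/subsetP=> v vR; have vD : v \notin D by move: (subsetP RD v vR); rewrite inE.
have S_le1 : \sum_(u | inZ e D u v) za u v <= 1.
  by rewrite -(inD v vD); apply: leq_sum => u; apply: zaz.
have bias := zaR v vR; have av_le1 := alpha01 v.
have [av1 S1] : alpha v = 1 /\ \sum_(u | inZ e D u v) za u v = 1 by lia.
move/eqP/sum_nat_eq1: S1 => [u [uv zau _]].
have zuv : z u v != 0 by rewrite -lt0n (leq_trans _ (zaz u v uv)) ?zau.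
have puv : p v = u by rewrite (arc_p u v uv zuv) pK.
have za_le_au : za u v <= alpha u.
  by case/and3P: (uv) => uD _ _; rewrite -(zaD u uD) (bigD1 v uv) leq_addr.
have := alpha01 u; rewrite !inE vD av1 puv /=; lia.
Qed.

End DissolutionToMatching.

Section CrossingInvolution.

Variables (T : finType) (e : rel T) (D : {set T}) (p : T -> T).

Definition crossing_flow (x y : T) : nat := y == p x.

Hypotheses (e_sym : symmetric e) (pK : involutive p) (pe : forall v, e v (p v))
  (pD : forall v, (p v \in D) = (v \notin D)).

Lemma crossing_out_sum v (F : T -> nat) :
  v \in D -> \sum_(u | inZ e D v u) (u == p v) * F u = F (p v).
Proof. by move=> vD; apply: sum_nat_pred1; rewrite /inZ vD pD vD pe. Qed.

Lemma crossing_in_sum v (F : T -> nat) :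
  v \notin D -> \sum_(u | inZ e D u v) (v == p u) * F u = F (p v).
Proof.
move=> vD; under eq_bigr do rewrite -(can2_eq pK pK) eq_sym.
by apply: sum_nat_pred1; rewrite /inZ pD vD e_sym pe.
Qed.

Lemma crossing_dissolution : dissolution e 1 1 D crossing_flow.
Proof.
split; first by move=> x y _; rewrite leq_b1.
split=> v vD.
  by rewrite -(crossing_out_sum (fun=> 1) vD); apply: eq_bigr => u _; rewrite muln1.
by rewrite -(crossing_in_sum (fun=> 1) vD); apply: eq_bigr => u _; rewrite muln1.
Qed.

Lemma crossing_biased_dissolution (alpha : T -> nat) (R : {set T}) :
  (forall v, alpha v <= 1) -> R \subset heavy_heads alpha D p ->
  biased_dissolution e 1 1 alpha #|R| D crossing_flow
    (fun x y => crossing_flow x y * alpha x) R.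
Proof.
move=> alpha01 RW; split; first exact: crossing_dissolution.
split; first by move=> x y _; apply: leq_mul (leq_b1 _) (alpha01 x).
split; first by apply/subsetP=> v /(subsetP RW); rewrite inE => /andP[].
split; first by [].
split.
  by move=> x y _; rewrite -[leqRHS]muln1 leq_mul2l alpha01 orbT.
split=> v.
  have [_ [outD _]] := crossing_dissolution.
  by move=> vD; rewrite -big_distrl /= outD ?mul1n.
move/(subsetP RW); rewrite !inE => /and3P[vD /eqP-> /eqP pv1].
by rewrite /crossing_flow crossing_in_sum // pv1.
Qed.

End CrossingInvolution.

Theorem lemma3 (T : finType) (e : rel T) (e_sym : symmetric e) (e_irr : irreflexive e)
    (r : nat) (alpha : T -> nat) (alpha01 : forall v, alpha v <= 1) :
  (exists (D : {set T}) (z za : T -> T -> nat) (R : {set T}),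
      biased_dissolution e 1 1 alpha r D z za R)
  <->
  (exists M : {set {set T}}, perfect_matching e M /\ r <= matching_weight alpha M).
Proof.
split=> [[D [z [za [R biased]]]] | [M [M_perfect r_le_weight]]].
  have [hz [_ [_ [R_card _]]]] := biased.
  have [p [pK pe pD arc_p]] := dissolution11_mate e_sym hz.
  exists (matching_of p); split; first exact: perfect_matching_of.
  rewrite (matching_weight_crossing alpha pK pD) -R_card.
  exact/subset_leq_card/(biased_dissolution11_heads alpha01 pK arc_p biased).
have [p [pK pe M_p]] := perfect_matching_involution e_sym e_irr M_perfect.
have pfix v : p v != v by apply: contraTneq (pe v) => ->; rewrite e_irr.
have [D pD] := crossing_set_exists pK pfix.
rewrite M_p (matching_weight_crossing alpha pK pD) in r_le_weight.
have [R RW <-] := card_subset_exists r_le_weight.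
exists D, (crossing_flow p), (fun x y => crossing_flow p x y * alpha x), R.
exact: crossing_biased_dissolution.
Qed.
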